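(* Let $\gamma\in\mathbb{R}$ with $\sin\gamma\neq0$, $q=e^{\mathrm{i}\gamma}$, $[x]_q=\sin(\gamma x)/\sin\gamma$, and $\varphi\in\mathbb{C}$ with $\sin\varphi\neq0$. For $s\in\mathbb{C}$, on the space $\mathfrak{S}_s$ with orthonormal basis $\{|k\rangle:k\in\mathbb{Z}_{\ge0}\}$ let $\mathbf{s}^z_s=\sum_{k\ge0}(s-k)|k\rangle\langle k|$, $\mathbf{s}^+_s=\sum_{k\ge0}[k+1]_q|k\rangle\langle k+1|$, $\mathbf{s}^-_s=\sum_{k\ge0}[2s-k]_q|k+1\rangle\langle k|$, and define the Lax operator $\mathbf{L}(\varphi,s)=\sum_{i,j=1}^2 e^{ij}\otimes\mathbf{L}_{ij}(\varphi,s)$ with $$\begin{pmatrix}\mathbf{L}_{11}&\mathbf{L}_{12}\\ \mathbf{L}_{21}&\mathbf{L}_{22}\end{pmatrix}=\begin{pmatrix}\sin(\varphi+\gamma\mathbf{s}^z_s)&(\sin\gamma)\mathbf{s}^-_s\\ (\sin\gamma)\mathbf{s}^+_s&\sin(\varphi-\gamma\mathbf{s}^z_s)\end{pmatrix},$$ and the operator on $(\mathbb{C}^2)^{\otimes n}$ $$W_n(\varphi,s)=\sum_{i_1,j_1,\dots,i_n,j_n}\langle0|\mathbf{L}_{i_1j_1}(\varphi,s)\cdots\mathbf{L}_{i_nj_n}(\varphi,s)|0\rangle\,e^{i_1j_1}\otimes\cdots\otimes e^{i_nj_n}.$$ Next let $\widetilde{\mathfrak{S}}$ be the space with orthonormal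 basis $\{|\mathrm{L}\rangle,|\mathrm{R}\rangle,|1\rangle,|2\rangle,\dots\}$, let $\tilde{\mathbf{s}}^z=\sum_{k\ge1}(-k)|k\rangle\langle k|$, $\tilde{\mathbf{s}}^+=\sum_{k\ge1}[k+1]_q|k\rangle\langle k+1|$, $\tilde{\mathbf{s}}^-=\sum_{k\ge1}[-k]_q|k+1\rangle\langle k|$ (all vanishing on $|\mathrm{L}\rangle,|\mathrm{R}\rangle$, and with $\cos(\gamma\tilde{\mathbf{s}}^z)$, $\sin(\gamma\tilde{\mathbf{s}}^z)$ acting on $|k\rangle$, $k\ge1$, by $\cos(\gamma k)$, $-\sin(\gamma k)$ and vanishing on $|\mathrm{L}\rangle,|\mathrm{R}\rangle$), and set \begin{align*} \widetilde{\mathbf{L}}^0(\varphi)&=|\mathrm{L}\rangle\langle\mathrm{L}|+|\mathrm{R}\rangle\langle\mathrm{R}|+\cos(\gamma\tilde{\mathbf{s}}^z),& \widetilde{\mathbf{L}}^z(\varphi)&=\cot\varphi\,\sin(\gamma\tilde{\mathbf{s}}^z),\\ \widetilde{\mathbf{L}}^+(\varphi)&=|1\rangle\langle\mathrm{R}|+\tfrac{\sin\gamma}{\sin\varphi}\tilde{\mathbf{s}}^-,& \widetilde{\mathbf{L}}^-(\varphi)&=|\mathrm{L}\rangle\langle1|+\tfrac{\sin\gamma}{\sin\varphi}\tilde{\mathbf{s}}^+, \end{align*} and $Z_n(\varphi)=\sum_{\alpha_1,\dots,\alpha_n\in\{0,+,-,z\}}\langle\mathrm{L}|\widetilde{\mathbf{L}}^{\alpha_1}(\varphi)\cdots\widetilde{\mathbf{L}}^{\alpha_n}(\varphi)|\mathrm{R}\rangle\,\sigma^{\alpha_1}\otimes\cdots\otimes\sigma^{\alpha_n}$.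 Then $$\frac{1}{(\sin\varphi)^n}\,\partial_s W_n(\varphi,s)\Big|_{s=0}=\frac{2\gamma\sin\gamma}{(\sin\varphi)^2}Z_n(\varphi)+\gamma\cot\varphi\,M_n,$$ where $M_n=\sum_{x=1}^n\mathbb{1}_{2^{x-1}}\otimes\sigma^z\otimes\mathbb{1}_{2^{n-x}}$.
   Context: $e^{ij}=|i\rangle\langle j|$ are $2\times2$ matrix units; $\sigma^0=\mathbb{1}_2$, $\sigma^+=e^{12}$, $\sigma^-=e^{21}$, $\sigma^z=e^{11}-e^{22}$. Functions of the diagonal operator $\mathbf{s}^z_s$ (such as $\sin(\varphi\pm\gamma\mathbf{s}^z_s)$) act diagonally on the basis $|k\rangle$. $n\ge1$. *)

From Stdlib Require Import Reals List.
From Coquelicot Require Import Coquelicot.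
Import ListNotations.
Open Scope C_scope.

Definition Cexp (z : C) : C :=
  (exp (fst z) * cos (snd z), exp (fst z) * sin (snd z))%R.
Definition Csin (z : C) : C := (Cexp (Ci * z) - Cexp (- (Ci * z))) / (2 * Ci).
Definition Ccos (z : C) : C := (Cexp (Ci * z) + Cexp (- (Ci * z))) / 2.
Definition Ccot (z : C) : C := Ccos z / Csin z.

Fixpoint Csum (m : nat) (f : nat -> C) : C :=
  match m with O => 0 | S k => Csum k f + f k end.
Fixpoint Cprod (m : nat) (f : nat -> C) : C :=
  match m with O => 1 | S k => Cprod k f * f k end.

Definition qnum (gamma : R) (x : C) : C := Csin (RtoC gamma * x) / Csin (RtoC gamma).

Inductive i2 := one | two.
Definition i2_eqb (a b : i2) : bool :=
  match a, b with one, one | two, two => true | _, _ => false end.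

Inductive alpha := a0 | ap | am | az.
Definition sigma (a : alpha) (i j : i2) : C :=
  match a, i, j with
  | a0, one, one | a0, two, two => 1
  | ap, one, two => 1
  | am, two, one => 1
  | az, one, one => 1
  | az, two, two => -1
  | _, _, _ => 0
  end.

(* ---------- the module S_s : vectors are coefficient sequences k |-> <k|v> ---------- *)
Definition svec := nat -> C.
Definition e0 : svec := fun k => match k with O => 1 | _ => 0 end.

(* Lax operator entries L_ij(phi,s) acting on S_s, read off from
   s^z = sum (s-k)|k><k|, s^+ = sum [k+1]_q |k><k+1|, s^- = sum [2s-k]_q |k+1><k| *)
Definition Lop (gamma : R) (phi s : C) (i j : i2) (v : svec) : svec :=
  fun k =>
  match i, j with
  | one, one => Csin (phi + RtoC gamma * (s - INR k)) * v k
  | one, two =>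
      match k with
      | O => 0
      | S k' => Csin (RtoC gamma) * qnum gamma (2 * s - INR k') * v k'
      end
  | two, one =>
      Csin (RtoC gamma) * qnum gamma (INR k + 1) * v (S k)
  | two, two => Csin (phi - RtoC gamma * (s - INR k)) * v k
  end.

(* A_0 (A_1 ( ... (A_{m-1} v))) *)
Fixpoint chain {V : Type} (m : nat) (A : nat -> V -> V) (v : V) : V :=
  match m with O => v | S k => chain k A (A k v) end.

(* matrix entry of W_n(phi,s) at row index (I 0,...,I (n-1)), column (J 0,...,J (n-1)):
   <0| L_{I0 J0} ... L_{I(n-1) J(n-1)} |0> *)
Definition Wn (gamma : R) (n : nat) (phi s : C) (I J : nat -> i2) : C :=
  chain n (fun x => Lop gamma phi s (I x) (J x)) e0 O.

(* tK m stands for the basis vector |m+1> *)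
Inductive tidx := tL | tR | tK (m : nat).
Definition tvec := tidx -> C.
Definition eR : tvec := fun t => match t with tR => 1 | _ => 0 end.

(* tilde L^alpha(phi), written out from the definitions:
   s~^z|k> = -k|k>, s~^+ |k+1> = [k+1]_q |k>, s~^- |k> = [-k]_q |k+1>  (k>=1),
   cos(gamma s~^z)|k> = cos(gamma k)|k>, sin(gamma s~^z)|k> = -sin(gamma k)|k>,
   all vanishing on |L>, |R>. *)
Definition Ltop (gamma : R) (phi : C) (a : alpha) (v : tvec) : tvec :=
  fun t =>
  match a, t with
  | a0, tL => v tL
  | a0, tR => v tR
  | a0, tK m => Ccos (RtoC gamma * INR (S m)) * v (tK m)
  | az, tK m => Ccot phi * (- Csin (RtoC gamma * INR (S m))) * v (tK m)
  | az, _ => 0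
  | ap, tK O => v tR
  | ap, tK (S m) =>
      Csin (RtoC gamma) / Csin phi * qnum gamma (- INR (S m)) * v (tK m)
  | ap, _ => 0
  | am, tL => v (tK O)
  | am, tK m =>
      Csin (RtoC gamma) / Csin phi * qnum gamma (INR (S (S m))) * v (tK (S m))
  | am, tR => 0
  end.

Fixpoint tchain (gamma : R) (phi : C) (w : list alpha) (v : tvec) : tvec :=
  match w with
  | [] => v
  | a :: w' => Ltop gamma phi a (tchain gamma phi w' v)
  end.

Fixpoint sum_words (m : nat) (F : list alpha -> C) : C :=
  match m with
  | O => F []
  | S k => sum_words k (fun w => F (a0 :: w)) + sum_words k (fun w => F (ap :: w))
         + sum_words k (fun w => F (am :: w)) + sum_words k (fun w => F (az :: w))
  end.

Definition Zn (gamma : R) (n : nat) (phi : C) (I J : nat -> i2) : C :=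
  sum_words n (fun w =>
    tchain gamma phi w eR tL * Cprod n (fun x => sigma (nth x w a0) (I x) (J x))).

Definition Mn (n : nat) (I J : nat -> i2) : C :=
  Csum n (fun x => Cprod n (fun y =>
    if Nat.eqb y x then sigma az (I y) (J y) else sigma a0 (I y) (J y))).

From Pilot Require Import Defs.
From Stdlib Require Import Reals List Lra.
From Coquelicot Require Import Coquelicot.
(* Re-imported so that [sigma] and [one] refer to Defs rather than to Reals and Coquelicot. *)
Import Defs.
Open Scope C_scope.

(* Differentiate <0|L_{i1 j1}(phi,s) ... L_{in jn}(phi,s)|0> at s = 0 from the right, carrying the
   pair (value, s-derivative) of the partial product applied to |0>.  At s = 0 each L_ij(phi,0)
   maps |0> to sigma^0_ij sin(phi) |0> (since [2s-k]_q vanishes at s = k = 0), while the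
   derivative creates at most one excitation |k+1>.  After r factors the pair is therefore
   encoded by a vector T of the auxiliary space S~ and a scalar mu: the value is
   (sin phi)^r T_R |0>, the |k+1>-component of the derivative is (sin phi)^r (2 gamma / sin phi) T_k
   and its |0>-component is (sin phi)^r (gamma cot(phi) mu + 2 gamma sin(gamma) / sin^2(phi) T_L).
   One more factor L_ij acts as sum_alpha sigma^alpha_ij L~^alpha on T and as
   mu |-> sigma^0_ij mu + sigma^z_ij T_R; each case is checked by a trigonometric addition formula.
   Starting from T = |R>, mu = 0, the final T_L is the entry of Z_n and mu that of M_n. *)

Section TaylorBounds.
Local Open Scope R_scope.

Lemma sin_taylor_nonneg b : 0 <= b <= 1/2 -> 0 <= sin b <= b /\ b - sin b <= b * b.
Proof.
  intros Hb.
  destruct (sin_bound b 0) as [Hlo Hhi]; [lra | generalize PI2_1; lra |].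
  unfold sin_approx, sum_f_R0, sin_term in *; simpl in *.
  assert (H2 : b * b <= b) by (rewrite <- (Rmult_1_r b) at 3; apply Rmult_le_compat_l; lra).
  assert (H3 : b * b * b <= b * b) by (apply Rmult_le_compat_r; nra).
  assert (H5 : b * (b * (b * (b * (b * 1)))) <= b * b * b).
  { replace (b * (b * (b * (b * (b * 1))))) with (b * b * b * (b * b)) by ring.
    rewrite <- (Rmult_1_r (b * b * b)) at 2.
    apply Rmult_le_compat_l; [apply Rmult_le_pos |]; nra. }
  lra.
Qed.

Lemma sin_taylor1_bound b :
  Rabs b <= 1/2 -> Rabs (sin b) <= Rabs b /\ Rabs (sin b - b) <= b * b.
Proof.
  intros Hb. destruct (Rle_dec 0 b) as [Hpos | Hneg].
  - rewrite Rabs_pos_eq in Hb by lra.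
    destruct (sin_taylor_nonneg b) as [Hs Hd]; [lra |].
    rewrite (Rabs_pos_eq b), (Rabs_pos_eq (sin b)), Rabs_left1 by lra. lra.
  - rewrite Rabs_left in Hb by lra.
    destruct (sin_taylor_nonneg (- b)) as [Hs Hd]; [lra |]. rewrite sin_neg in Hs, Hd.
    rewrite (Rabs_left b), (Rabs_left1 (sin b)), Rabs_pos_eq by lra. nra.
Qed.

Lemma cos_taylor1_bound b : Rabs b <= 1/2 -> Rabs (cos b - 1) <= b * b / 2.
Proof.
  intros Hb. apply Rabs_le_between in Hb.
  destruct (cos_bound b 0) as [Hlo _]; [generalize PI2_1; lra .. |].
  unfold cos_approx, sum_f_R0, cos_term in Hlo; simpl in Hlo.
  pose proof (COS_bound b).
  rewrite Rabs_left1; lra.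
Qed.

Lemma exp_taylor1_bound a : Rabs a <= 1/2 -> 0 <= exp a - 1 - a <= 2 * (a * a).
Proof.
  intros Ha. apply Rabs_le_between in Ha.
  assert (Hinv : exp a * exp (- a) = 1) by (rewrite <- exp_plus, Rplus_opp_r; apply exp_0).
  pose proof (exp_ineq1_le a). pose proof (exp_ineq1_le (- a)). pose proof (exp_pos a).
  split; nra.
Qed.

End TaylorBounds.

Lemma Cexp_plus a b : Cexp (a + b) = Cexp a * Cexp b.
Proof.
  destruct a as [a1 a2], b as [b1 b2]. unfold Cexp, Cmult; simpl.
  rewrite exp_plus, cos_plus, sin_plus. f_equal; ring.
Qed.

Lemma Cexp_0 : Cexp 0 = 1.
Proof. unfold Cexp; simpl. rewrite exp_0, cos_0, sin_0. unfold RtoC. f_equal; ring. Qed.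

Lemma Cexp_taylor1_bound h :
  (Cmod h <= 1/2)%R -> (Cmod (Cexp h - 1 - h) <= 4 * (Cmod h * Cmod h))%R.
Proof.
  destruct h as [a b]. intros Hh.
  pose proof (Rmax_Cmod (a, b)) as Hmax; simpl in Hmax.
  assert (Ha : (Rabs a <= 1/2)%R) by (generalize (Rmax_l (Rabs a) (Rabs b)); lra).
  assert (Hb : (Rabs b <= 1/2)%R) by (generalize (Rmax_r (Rabs a) (Rabs b)); lra).
  assert (Hsq : (Cmod (a, b) * Cmod (a, b) = a * a + b * b)%R).
  { pose proof (Cmod2_alt (a, b)) as E; simpl in E. nra. }
  rewrite Hsq.
  replace (Cexp (a, b) - 1 - (a, b))
    with (RtoC (exp a * (cos b - 1) + (exp a - 1 - a)) + RtoC ((exp a - 1) * sin b + (sin b - b)) * Ci)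
    by (unfold Cexp, RtoC, Ci, Cminus, Cplus, Copp, Cmult; simpl; f_equal; ring).
  eapply Rle_trans; [apply Cmod_triangle |].
  rewrite Cmod_mult, Cmod_Ci, !Cmod_R, Rmult_1_r.
  destruct (exp_taylor1_bound a Ha) as [He1 He2].
  destruct (sin_taylor1_bound b Hb) as [Hs1 Hs2].
  pose proof (cos_taylor1_bound b Hb) as Hc.
  pose proof (exp_pos a) as Hexp.
  assert (Hexp1 : (Rabs (exp a - 1) <= 2 * Rabs a)%R).
  { apply Rabs_le_between in Ha. apply Rabs_le.
    destruct (Rle_dec 0 a); [rewrite Rabs_pos_eq | rewrite Rabs_left]; nra. }
  assert (Hre : (Rabs (exp a * (cos b - 1) + (exp a - 1 - a)) <= b * b + 2 * (a * a))%R).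
  { eapply Rle_trans; [apply Rabs_triang |].
    rewrite Rabs_mult, (Rabs_pos_eq (exp a)), (Rabs_pos_eq (exp a - 1 - a)) by lra.
    assert (exp a <= 2) by (apply Rabs_le_between in Ha; nra).
    pose proof (Rabs_pos (cos b - 1)).
    assert (exp a * Rabs (cos b - 1) <= 2 * (b * b / 2))
      by (apply Rmult_le_compat; lra).
    lra. }
  assert (Him : (Rabs ((exp a - 1) * sin b + (sin b - b)) <= a * a + 2 * (b * b))%R).
  { eapply Rle_trans; [apply Rabs_triang |]. rewrite Rabs_mult.
    assert (Rabs (exp a - 1) * Rabs (sin b) <= 2 * Rabs a * Rabs b)%R
      by (apply Rmult_le_compat; auto using Rabs_pos).
    assert (2 * Rabs a * Rabs b <= a * a + b * b)%R.
    { rewrite <- (Rabs_pos_eq (a * a)), <- (Rabs_pos_eq (b * b)), !Rabs_mult by nra.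
      pose proof (Rle_0_sqr (Rabs a - Rabs b)). unfold Rsqr in *. nra. }
    lra. }
  pose proof (Rle_0_sqr a). pose proof (Rle_0_sqr b). unfold Rsqr in *. lra.
Qed.

(* Coquelicot's product and chain rules live on [AbsRing_NormedModule C_AbsRing], not on
   [C_NormedModule]; we differentiate there and convert once at the end. *)
Local Notation is_Cderive := (is_derive (K := C_AbsRing) (V := AbsRing_NormedModule C_AbsRing)).

Lemma is_Cderive_C_NormedModule (f : C -> C) (x l : C) :
  is_Cderive f x l -> is_derive (K := C_AbsRing) (V := C_NormedModule) f x l.
Proof.
  intros [[Hplus Hscal [M HM]] Hdiff].
  split; [split; auto; exists M; exact HM | exact Hdiff].
Qed.

Lemma is_Cderive_eq (f : C -> C) (x l l' : C) : is_Cderive f x l' -> l' = l -> is_Cderive f x l.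
Proof. now intros H ->. Qed.

Lemma is_Cderive_ext (f g : C -> C) (x l : C) :
  (forall t, f t = g t) -> is_Cderive f x l -> is_Cderive g x l.
Proof. exact (is_derive_ext (K := C_AbsRing) (V := AbsRing_NormedModule C_AbsRing) f g x l). Qed.

Lemma is_Cderive_const (c x : C) : is_Cderive (fun _ => c) x (RtoC 0).
Proof. exact (is_derive_const (K := C_AbsRing) (V := AbsRing_NormedModule C_AbsRing) c x). Qed.

Lemma is_Cderive_id (x : C) : is_Cderive (fun t => t) x (RtoC 1).
Proof. exact (is_derive_id (K := C_AbsRing) x). Qed.

Lemma is_Cderive_plus (f g : C -> C) (x df dg : C) :
  is_Cderive f x df -> is_Cderive g x dg -> is_Cderive (fun t => f t + g t) x (df + dg).
Proof. exact (is_derive_plus (K := C_AbsRing) (V := AbsRing_NormedModule C_AbsRing) f g x df dg). Qed.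

Lemma is_Cderive_minus (f g : C -> C) (x df dg : C) :
  is_Cderive f x df -> is_Cderive g x dg -> is_Cderive (fun t => f t - g t) x (df - dg).
Proof. exact (is_derive_minus (K := C_AbsRing) (V := AbsRing_NormedModule C_AbsRing) f g x df dg). Qed.

Lemma is_Cderive_mult (f g : C -> C) (x df dg : C) :
  is_Cderive f x df -> is_Cderive g x dg ->
  is_Cderive (fun t => f t * g t) x (df * g x + f x * dg).
Proof. intros Hf Hg. exact (is_derive_mult (K := C_AbsRing) f g x df dg Hf Hg Cmult_comm). Qed.

Lemma is_Cderive_mult_l (c : C) (f : C -> C) (x df : C) :
  is_Cderive f x df -> is_Cderive (fun t => c * f t) x (c * df).
Proof.
  intros Hf. eapply is_Cderive_eq; [apply is_Cderive_mult; [apply is_Cderive_const | exact Hf] |].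
  simpl. ring.
Qed.

Lemma is_Cderive_comp_affine (f : C -> C) (a b x df : C) :
  is_Cderive f (a * x + b) df -> is_Cderive (fun s => f (a * s + b)) x (a * df).
Proof.
  intros Hf.
  apply (is_derive_comp (K := C_AbsRing) (V := AbsRing_NormedModule C_AbsRing) f (fun s => a * s + b));
    [exact Hf |].
  eapply is_Cderive_eq;
    [apply is_Cderive_plus; [apply is_Cderive_mult_l, is_Cderive_id | apply is_Cderive_const] |].
  ring.
Qed.

Lemma is_derive_Cexp_0 : is_Cderive Cexp (RtoC 0) (RtoC 1).
Proof.
  split; [apply is_linear_scal_l |].
  intros x Hx.
  apply (is_filter_lim_locally_unique (K := C_AbsRing) (V := AbsRing_NormedModule C_AbsRing)) in Hx.
  subst x.
  intros eps.
  assert (Hd : (0 < Rmin (1/2) (eps / 4))%R)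
    by (apply Rmin_pos; [lra | apply Rdiv_lt_0_compat; [apply cond_pos | lra]]).
  exists (mkposreal _ Hd). intros y Hy. change C in y.
  change (Cmod (y - 0) < Rmin (1/2) (eps / 4))%R in Hy.
  change (Cmod ((Cexp y - Cexp 0) - (y - 0) * 1) <= eps * Cmod (y - 0))%R.
  rewrite Cexp_0. replace (y - 0) with y in * by ring.
  replace (Cexp y - 1 - y * 1) with (Cexp y - 1 - y) by ring.
  pose proof (Rmin_l (1/2) (eps / 4)). pose proof (Rmin_r (1/2) (eps / 4)).
  pose proof (Cexp_taylor1_bound y ltac:(lra)). pose proof (Cmod_ge_0 y).
  nra.
Qed.

Lemma is_derive_Cexp (z : C) : is_Cderive Cexp z (Cexp z).
Proof.
  apply is_Cderive_ext with (fun y => Cexp z * Cexp (1 * y + - z)).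
  { intros y. rewrite <- Cexp_plus. f_equal. ring. }
  eapply is_Cderive_eq.
  - apply is_Cderive_mult_l, is_Cderive_comp_affine.
    replace (1 * z + - z) with (RtoC 0) by ring. apply is_derive_Cexp_0.
  - ring.
Qed.

Lemma Csin_plus x y : Csin (x + y) = Csin x * Ccos y + Ccos x * Csin y.
Proof.
  unfold Csin, Ccos.
  replace (Ci * (x + y)) with (Ci * x + Ci * y) by ring.
  replace (- (Ci * x + Ci * y)) with (- (Ci * x) + - (Ci * y)) by ring.
  rewrite !Cexp_plus. field. exact Ci_nz.
Qed.

Lemma Csin_opp x : Csin (- x) = - Csin x.
Proof.
  unfold Csin. replace (Ci * - x) with (- (Ci * x)) by ring.
  replace (- - (Ci * x)) with (Ci * x) by ring. field. exact Ci_nz.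
Qed.

Lemma Ccos_opp x : Ccos (- x) = Ccos x.
Proof.
  unfold Ccos. replace (Ci * - x) with (- (Ci * x)) by ring.
  replace (- - (Ci * x)) with (Ci * x) by ring. field.
Qed.

Lemma Csin_0 : Csin 0 = 0.
Proof.
  unfold Csin. rewrite Cmult_0_r, Copp_0, Cexp_0. field. exact Ci_nz.
Qed.

Lemma Ccos_0 : Ccos 0 = 1.
Proof. unfold Ccos. rewrite Cmult_0_r, Copp_0, Cexp_0. field. Qed.

Lemma Csin_RtoC (x : R) : Csin (RtoC x) = RtoC (sin x).
Proof.
  unfold Csin.
  replace (Ci * RtoC x) with ((0%R, x) : C) by (unfold Ci, RtoC, Cmult; simpl; f_equal; ring).
  replace (Cexp (- (0%R, x))) with (Cconj (Cexp (0%R, x))).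
  - rewrite <- im_alt. unfold Cexp; simpl. rewrite exp_0, Rmult_1_l. reflexivity.
  - unfold Cexp, Cconj, Copp; simpl. rewrite Ropp_0, exp_0, cos_neg, sin_neg. f_equal; ring.
Qed.

Lemma is_derive_Csin (z : C) : is_Cderive Csin z (Ccos z).
Proof.
  unfold Csin, Ccos.
  eapply is_Cderive_eq.
  - apply is_Cderive_mult; [| apply is_Cderive_const].
    apply is_Cderive_minus.
    + apply is_Cderive_ext with (fun s => Cexp (Ci * s + 0)); [intros; f_equal; ring |].
      apply is_Cderive_comp_affine, is_derive_Cexp.
    + apply is_Cderive_ext with (fun s => Cexp (- Ci * s + 0)); [intros; f_equal; ring |].
      apply is_Cderive_comp_affine, is_derive_Cexp.
  - replace (Ci * z + 0) with (Ci * z) by ring. replace (- Ci * z + 0) with (- (Ci * z)) by ring.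
    field. exact Ci_nz.
Qed.

Lemma is_derive_Csin_affine (a b x : C) :
  is_Cderive (fun s => Csin (a * s + b)) x (a * Ccos (a * x + b)).
Proof. apply is_Cderive_comp_affine, is_derive_Csin. Qed.

Section LaxOperator.
Variables (gamma : R) (phi : C).
Local Notation g := (RtoC gamma).

(* [dLop s i j] is the s-derivative of [Lop gamma phi s i j]; in the (1,2) entry the derivative
   of [Csin g * qnum gamma (2 s - k)] is kept in this form so that [Csin g <> 0] is not needed. *)
Definition dLop (s : C) (i j : i2) (v : svec) : svec := fun k =>
  match i, j with
  | one, one => g * Ccos (phi + g * (s - INR k)) * v k
  | one, two =>
      match k with
      | O => 0
      | S k' => Csin g * (2 * g * Ccos (g * (2 * s - INR k')) / Csin g) * v k'
      end
  | two, one => 0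
  | two, two => - g * Ccos (phi - g * (s - INR k)) * v k
  end.

Lemma is_derive_Lop s0 i j (V : C -> svec) (dV : svec) :
  (forall k, is_Cderive (fun s => V s k) s0 (dV k)) ->
  forall k, is_Cderive (fun s => Lop gamma phi s i j (V s) k) s0
                       (dLop s0 i j (V s0) k + Lop gamma phi s0 i j dV k).
Proof.
  intros HV k. unfold Lop, dLop. destruct i, j.
  - eapply is_Cderive_eq; [apply is_Cderive_mult; [| apply HV] |].
    + apply is_Cderive_ext with (fun s => Csin (g * s + (phi - g * INR k))); [intros; f_equal; ring |].
      apply is_derive_Csin_affine.
    + replace (g * s0 + (phi - g * INR k)) with (phi + g * (s0 - INR k)) by ring. reflexivity.
  - destruct k as [| k'].
    + eapply is_Cderive_eq; [apply is_Cderive_const | ring].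
    + eapply is_Cderive_eq; [apply is_Cderive_mult; [apply is_Cderive_mult_l | apply HV] |].
      * unfold qnum. apply is_Cderive_ext with (fun s => Csin ((2 * g) * s + - (g * INR k')) * / Csin g);
          [intros; unfold Cdiv; f_equal; f_equal; ring |].
        apply is_Cderive_mult; [apply is_derive_Csin_affine | apply is_Cderive_const].
      * replace (2 * g * s0 + - (g * INR k')) with (g * (2 * s0 - INR k')) by ring.
        unfold Cdiv. ring.
  - eapply is_Cderive_eq; [apply is_Cderive_mult_l, HV | ring].
  - eapply is_Cderive_eq; [apply is_Cderive_mult; [| apply HV] |].
    + apply is_Cderive_ext with (fun s => Csin (- g * s + (phi + g * INR k))); [intros; f_equal; ring |].
      apply is_derive_Csin_affine.
    + replace (- g * s0 + (phi + g * INR k)) with (phi - g * (s0 - INR k)) by ring. reflexivity.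
Qed.

Definition jet_step (s0 : C) (i j : i2) (p : svec * svec) : svec * svec :=
  (Lop gamma phi s0 i j (fst p),
   fun k => dLop s0 i j (fst p) k + Lop gamma phi s0 i j (snd p) k).

Lemma is_derive_chain_Lop s0 (I J : nat -> i2) m (V : C -> svec) (dV : svec) :
  (forall k, is_Cderive (fun s => V s k) s0 (dV k)) ->
  forall k, is_Cderive (fun s => chain m (fun x => Lop gamma phi s (I x) (J x)) (V s) k) s0
    (snd (chain m (fun x => jet_step s0 (I x) (J x)) (V s0, dV)) k).
Proof.
  revert V dV. induction m as [| m IH]; intros V dV HV; [exact HV |].
  apply (IH (fun s => Lop gamma phi s (I m) (J m) (V s))).
  apply is_derive_Lop, HV.
Qed.

End LaxOperator.

Lemma chain_S_l {V : Type} m (A : nat -> V -> V) v :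
  chain (S m) A v = A O (chain m (fun x => A (S x)) v).
Proof.
  revert A v. induction m as [| m IH]; intros A v; [reflexivity |].
  change (chain (S (S m)) A v) with (chain (S m) A (A (S m) v)).
  now rewrite IH.
Qed.

Lemma Csum_ext m f f' : (forall x, f x = f' x) -> Csum m f = Csum m f'.
Proof. intros H. induction m as [| m IH]; simpl; [reflexivity |]. now rewrite IH, H. Qed.

Lemma Csum_S_l m f : Csum (S m) f = f O + Csum m (fun x => f (S x)).
Proof.
  revert f. induction m as [| m IH]; intros f; simpl; [ring |].
  simpl in IH. rewrite IH. ring.
Qed.

Lemma Csum_mult_l m c f : Csum m (fun x => c * f x) = c * Csum m f.
Proof. induction m as [| m IH]; simpl; [ring |]. rewrite IH. ring. Qed.

Lemma Cprod_S_l m f : Cprod (S m) f = f O * Cprod m (fun x => f (S x)).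
Proof.
  revert f. induction m as [| m IH]; intros f; simpl; [ring |].
  simpl in IH. rewrite IH. ring.
Qed.

Lemma sum_words_ext m F F' : (forall w, F w = F' w) -> sum_words m F = sum_words m F'.
Proof.
  revert F F'. induction m as [| m IH]; intros F F' H; simpl; [apply H |].
  f_equal; [f_equal; [f_equal |] |]; apply IH; intros; apply H.
Qed.

Lemma sum_words_mult_l m c F : sum_words m (fun w => c * F w) = c * sum_words m F.
Proof.
  revert F. induction m as [| m IH]; intros F; simpl; [reflexivity |].
  rewrite !IH. ring.
Qed.

Lemma Mn_S_l m (I J : nat -> i2) :
  Mn (S m) I J = sigma a0 (I O) (J O) * Mn m (fun x => I (S x)) (fun x => J (S x))
               + sigma az (I O) (J O) * Cprod m (fun y => sigma a0 (I (S y)) (J (S y))).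
Proof.
  unfold Mn. rewrite Csum_S_l, Cprod_S_l. simpl Nat.eqb.
  rewrite <- Csum_mult_l, Cplus_comm. f_equal.
  apply Csum_ext. intros x. now rewrite Cprod_S_l.
Qed.

Section TildeOperator.
Variables (gamma : R) (phi : C).

Definition Ltilde (i j : i2) (T : tvec) : tvec := fun t =>
  sigma a0 i j * Ltop gamma phi a0 T t + sigma ap i j * Ltop gamma phi ap T t
  + sigma am i j * Ltop gamma phi am T t + sigma az i j * Ltop gamma phi az T t.

Lemma Ltop_monomial a t : exists c t', forall X, Ltop gamma phi a X t = c * X t'.
Proof.
  destruct a, t as [| | [| m]]; simpl;
    first [ exists 0, tL; intros X; ring
          | exists 1, tL; intros X; ring
          | exists 1, tR; intros X; ring
          | exists 1, (tK 0); intros X; ring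
          | eexists; eexists; intros X; reflexivity ].
Qed.

Lemma sum_words_tchain m (I J : nat -> i2) v t :
  sum_words m (fun w => tchain gamma phi w v t * Cprod m (fun x => sigma (nth x w a0) (I x) (J x)))
  = chain m (fun x => Ltilde (I x) (J x)) v t.
Proof.
  revert I J t. induction m as [| m IH]; intros I J t; [simpl; ring |].
  assert (Hword : forall a,
    sum_words m (fun w => tchain gamma phi (a :: w) v t
                          * Cprod (S m) (fun x => sigma (nth x (a :: w) a0) (I x) (J x)))
    = sigma a (I O) (J O) * Ltop gamma phi a (chain m (fun x => Ltilde (I (S x)) (J (S x))) v) t).
  { intros a. destruct (Ltop_monomial a t) as [c [t' Hc]].
    rewrite Hc, <- IH, Cmult_assoc, <- sum_words_mult_l.
    apply sum_words_ext. intros w. simpl tchain. rewrite Hc, Cprod_S_l. simpl nth. ring. }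
  cbn [sum_words]. rewrite !Hword, chain_S_l. reflexivity.
Qed.

Lemma Zn_chain n (I J : nat -> i2) : Zn gamma n phi I J = chain n (fun x => Ltilde (I x) (J x)) eR tL.
Proof. apply sum_words_tchain. Qed.

Lemma chain_Ltilde_R m (I J : nat -> i2) v :
  chain m (fun x => Ltilde (I x) (J x)) v tR = Cprod m (fun y => sigma a0 (I y) (J y)) * v tR.
Proof.
  revert I J. induction m as [| m IH]; intros I J; [simpl; ring |].
  rewrite chain_S_l, Cprod_S_l. unfold Ltilde at 1. simpl Ltop. rewrite IH. ring.
Qed.

Definition tilde_step (i j : i2) (q : tvec * C) : tvec * C :=
  (Ltilde i j (fst q), sigma a0 i j * snd q + sigma az i j * fst q tR).

Lemma chain_tilde_step m (I J : nat -> i2) :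
  chain m (fun x => tilde_step (I x) (J x)) (eR, RtoC 0)
  = (chain m (fun x => Ltilde (I x) (J x)) eR, Mn m I J).
Proof.
  revert I J. induction m as [| m IH]; intros I J; [reflexivity |].
  rewrite !chain_S_l, IH, Mn_S_l. unfold tilde_step; cbn [fst snd].
  rewrite chain_Ltilde_R. change (eR tR) with (RtoC 1). f_equal. ring.
Qed.

End TildeOperator.

Lemma Cmult_0_sub (c x : C) : c * (0 - x) = - (c * x).
Proof. ring. Qed.

Lemma Cmult_0_sub_l (c x : C) : c * 0 - x = - x.
Proof. ring. Qed.

Lemma RtoC_INR_S k : RtoC (INR k) + 1 = RtoC (INR (S k)).
Proof. now rewrite S_INR, RtoC_plus. Qed.

Lemma qnum_0 gamma : qnum gamma 0 = 0.
Proof. unfold qnum. rewrite Cmult_0_r, Csin_0. unfold Cdiv. ring. Qed.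

Lemma qnum_1 gamma : Csin (RtoC gamma) <> 0 -> qnum gamma 1 = 1.
Proof. intros Hsg. unfold qnum. rewrite Cmult_1_r. field. exact Hsg. Qed.

Section Correspondence.
Variables (gamma : R) (phi : C).
Hypotheses (Hsp : Csin phi <> 0) (Hsg : Csin (RtoC gamma) <> 0).
Local Notation g := (RtoC gamma).
Local Notation sp := (Csin phi).
Local Notation sg := (Csin (RtoC gamma)).

Definition represents (r : nat) (p : svec * svec) (q : tvec * C) : Prop :=
  let (v, dv) := p in
  let (T, mu) := q in
  v O = Cpow sp r * T tR /\ (forall m, v (S m) = 0) /\
  dv O = Cpow sp r * (g * Ccot phi * mu + 2 * g * sg / (sp * sp) * T tL) /\
  (forall m, dv (S m) = Cpow sp r * (2 * g / sp) * T (tK m)).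

(* The diagonal entries reduce to sin(phi -+ gamma k) = sin phi cos(gamma k) -+ cos phi sin(gamma k),
   the off-diagonal ones to [0]_q = 0 and [1]_q = 1. *)
Lemma represents_step r i j p q :
  represents r p q -> represents (S r) (jet_step gamma phi 0 i j p) (tilde_step gamma phi i j q).
Proof.
  destruct p as [v dv], q as [T mu].
  unfold represents, jet_step, tilde_step, Ltilde, Lop, dLop.
  cbn -[INR Csin Ccos qnum Cpow Ccot].
  intros [H1 [H2 [H3 H4]]].
  destruct i, j; cbn -[INR Csin Ccos qnum Cpow Ccot]; (split; [| split; [| split]]).
  all: try (intros [| m]); cbn -[INR Csin Ccos qnum Cpow Ccot].
  all: rewrite ?INR_0, ?RtoC_INR_S, ?Cmult_0_sub, ?Cmult_0_sub_l; unfold Cminus.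
  all: rewrite ?Cmult_0_r, ?Copp_0, ?Cplus_0_l, ?Cplus_0_r.
  all: rewrite ?Cmult_0_r, ?qnum_0, ?(qnum_1 gamma Hsg), ?Csin_plus, ?Csin_opp, ?Ccos_opp,
         ?Csin_0, ?Ccos_0.
  all: rewrite ?H1, ?H2, ?H3, ?H4, ?Cpow_S.
  all: unfold Ccot.
  all: field; auto.
Qed.

Lemma represents_chain (I J : nat -> i2) k r p q :
  represents r p q ->
  represents (k + r) (chain k (fun x => jet_step gamma phi 0 (I x) (J x)) p)
                     (chain k (fun x => tilde_step gamma phi (I x) (J x)) q).
Proof.
  revert r p q. induction k as [| k IH]; intros r p q Hrep; [exact Hrep |].
  simpl. rewrite <- Nat.add_succ_r. apply IH, represents_step, Hrep.
Qed.

Lemma derivative_at_vacuum n (I J : nat -> i2) :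
  snd (chain n (fun x => jet_step gamma phi 0 (I x) (J x)) (e0, fun _ => RtoC 0)) O
  = Cpow sp n * (g * Ccot phi * Mn n I J + 2 * g * sg / (sp * sp) * Zn gamma n phi I J).
Proof.
  assert (Hrep : represents 0 (e0, fun _ => RtoC 0) (eR, RtoC 0)).
  { repeat split; intros; simpl; ring. }
  pose proof (represents_chain I J n 0 _ _ Hrep) as Hn.
  rewrite Nat.add_0_r, chain_tilde_step in Hn.
  destruct (chain n (fun x => jet_step gamma phi 0 (I x) (J x)) (e0, fun _ => RtoC 0)) as [v dv].
  destruct Hn as [_ [_ [Hd _]]].
  simpl. rewrite Hd, Zn_chain. reflexivity.
Qed.

End Correspondence.

Theorem mainTheorem3 (gamma : R) (phi : C) (n : nat)
  (Hg : sin gamma <> 0%R) (Hphi : Csin phi <> RtoC 0) (Hn : (1 <= n)%nat)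
  (I J : nat -> i2) :
  is_derive (K := C_AbsRing) (V := C_NormedModule)
    (fun s : C => / Cpow (Csin phi) n * Wn gamma n phi s I J) (RtoC 0)
    (2 * RtoC gamma * Csin (RtoC gamma) / Cpow (Csin phi) 2 * Zn gamma n phi I J
     + RtoC gamma * Ccot phi * Mn n I J).
Proof.
  assert (Hsg : Csin (RtoC gamma) <> 0).
  { rewrite Csin_RtoC. intros H. apply Hg. now injection H. }
  apply is_Cderive_C_NormedModule.
  eapply is_Cderive_eq.
  - apply is_Cderive_mult_l.
    apply (is_derive_chain_Lop gamma phi (RtoC 0) I J n (fun _ => e0) (fun _ => RtoC 0)).
    intros; apply is_Cderive_const.
  - rewrite derivative_at_vacuum by assumption.
    unfold Ccot. simpl Cpow. field. split; [exact Hphi | now apply Cpow_nz].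
Qed.
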